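(* Let $w\geqslant 2$ and $h\geqslant 1$ be integers, let $\underline h=2^{\lfloor\log_2 h\rfloor}$, and let $\mathcal{H}_{h,w}$ be the set of (mostly vertical, inclined to the right) fast Hough transform patterns on the $h\times w$ image. Then $$\mathrm{OR}(\mathcal{H}_{h,w})\geqslant 3\,w\,\underline h\,\log_3\underline h.$$
   Context: Image: for integers $h\geqslant1$ (height) and $w\geqslant2$ (width), an image is the set $I$ of $wh$ pixel variables $p_{ij}$, $i=0,\dots,h-1$ (row index, counted from the bottom), $j=0,\dots,w-1$ (column index). A pattern is a nonempty subset of $I$; a pattern set $\mathcal{T}=\{T_k\}_{k=1}^m$ is a nonempty set of $m$ distinct patterns. Computing $\mathcal{T}$ means computing simultaneously $y_k=\sum_{p\in T_k}p$, $k=1,\dots,m$, where the ''sum'' is a commutative semigroup operation on pixel values. Circuits: a circuit is a directed acyclic graph with $wh$ input nodes $p_{ij}$ of fanin zero and $m$ output nodes $y_k$ of fanout zero; every node of nonzero fanin (a gate) may have any positive number of incoming edges and computes the semigroup sum of the values of its in-neighbours. The size of a circuit is its number of edges. A circuit computes $\mathcal{T}$ if, for every assignment of values to the inputs, output $y_k$ equals $\sum_{p\in T_k}p$ for all $k$. $\mathrm{OR}(\mathcal{T})$ is the minimal size of a circuit computing $\mathcal{T}$ when pixel values lie in $\{0,1\}$ and the operation is logical $\vee$. FHT patterns: for a pattern $T$ containing exactly one pixel in each of its rows, let $\Delta(T)=(j_{top}-j_{bot})\bmod w$, where $j_{top},j_{bot}$ are the column indices of the topmost and bottommost pixels of $T$,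 and let $\mathit{tran}_{a,b}(T)=\{p_{i+a,\,(j+b)\bmod w}\mid p_{ij}\in T\}$. For $h=2^d$ define $\mathcal{H}_0=\{\{p_{00}\},\{p_{01}\},\dots,\{p_{0,w-1}\}\}$ and, for $k=1,\dots,d$, $\mathcal{H}_k=\{T\cup\mathit{tran}_{2^{k-1},\,\Delta(T)+s}(T)\mid T\in\mathcal{H}_{k-1},\ s\in\{0,1\}\}$; set $\mathcal{H}_{h,w}=\mathcal{H}_d$. For arbitrary $h\geqslant1$, let $\overline h=2^{\lceil\log_2h\rceil}$, view the $h\times w$ image $I$ as the bottom $h$ rows of the $\overline h\times w$ image, and set $\mathcal{H}_{h,w}=\{T\cap I\mid T\in\mathcal{H}_{\overline h,w}\}$. *)

From Stdlib Require Import Reals.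
From mathcomp Require Import all_boot.

Set Implicit Arguments.
Unset Strict Implicit.
Unset Printing Implicit Defensive.

(* Images and pixels: pixel p_{ij} is the pair (i, j), i = row (from   *)
(* the bottom), j = column.                                             *)
Definition pixel (h w : nat) := ('I_h * 'I_w)%type.

Section FHT.
Variables (H w : nat).

Definition pcol (T : {set pixel H w}) (r : nat) : nat :=
  if [pick p in T | nat_of_ord p.1 == r] is Some p then nat_of_ord p.2 else 0.

Definition rtop (T : {set pixel H w}) : nat := \max_(p in T) nat_of_ord p.1.
Definition rbot (T : {set pixel H w}) : nat :=
  \big[minn/H]_(p in T) nat_of_ord p.1.

Definition Delta (T : {set pixel H w}) : nat :=
  (pcol T (rtop T) + w - pcol T (rbot T)) %% w.

Definition tran (a b : nat) (T : {set pixel H w}) : {set pixel H w} :=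
  [set p : pixel H w | [exists q in T,
     (nat_of_ord p.1 == nat_of_ord q.1 + a) &&
     (nat_of_ord p.2 == (nat_of_ord q.2 + b) %% w)]].

Fixpoint Hk (k : nat) : {set {set pixel H w}} :=
  match k with
  | 0 => [set [set p] | p in [set p : pixel H w | nat_of_ord p.1 == 0]]
  | k'.+1 => [set T :|: tran (2 ^ k') (Delta T + nat_of_bool s) T
               | T in Hk k', s in [set: bool]]
  end.
End FHT.

Definition hbar (h : nat) : nat := 2 ^ up_log 2 h.

Definition FHT (h w : nat) : {set {set pixel h w}} :=
  [set [set p : pixel h w | [exists q in T,
          (nat_of_ord q.1 == nat_of_ord p.1) && (nat_of_ord q.2 == nat_of_ord p.2)]]
   | T : {set pixel (hbar h) w} in Hk (hbar h) w (up_log 2 h)].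

(* OR-circuits.  Nodes are the w*h inputs (one per pixel) and n gates   *)
(* 'I_n.  The gates are listed in a topological order: gate g has a     *)
(* nonempty set of in-neighbours, every gate in-neighbour of g has a    *)
(* smaller index (this encodes acyclicity).  Size = number of edges.    *)
Definition node (h w n : nat) := (pixel h w + 'I_n)%type.

Section Circuits.
Variables (h w n : nat).
Variable pr : 'I_n -> {set node h w n}.

Definition well_formed : Prop :=
  forall g : 'I_n, pr g != set0 /\
    (forall g' : 'I_n, inr g' \in pr g -> (nat_of_ord g' < nat_of_ord g)%N).

Fixpoint gval (f : pixel h w -> bool) (k : nat) (g : 'I_n) : bool :=
  match k with
  | 0 => false
  | k'.+1 => [exists x in pr g,
               match x with inl p => f p | inr g' => gval f k' g' end]
  end.

(* depth of any gate is at most n, so fuel n suffices *)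
Definition nval (f : pixel h w -> bool) (x : node h w n) : bool :=
  match x with inl p => f p | inr g => gval f n g end.

Definition csize : nat := \sum_(g < n) #|pr g|.

Definition computes (out : {set pixel h w} -> node h w n)
    (S : {set {set pixel h w}}) : Prop :=
  [/\ well_formed,
      {in S &, injective out},
      (forall T, T \in S -> forall g : 'I_n, out T \notin pr g) &
      (forall (f : pixel h w -> bool) T, T \in S ->
          nval f (out T) = [exists p in T, f p])].
End Circuits.

Definition lower_bound (w hl : nat) : R :=
  Rmult (Rmult (Rmult (INR 3) (INR w)) (INR hl)) (Rdiv (ln (INR hl)) (ln (INR 3))).

(* There every pattern of H_{h,w} is an FHT
   line of height hl, determined by its bottom column j < w and its choice code t < hl, so
   the circuit has w * hl outputs, each depending on hl bottom pixels.  For an output y and a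
   pixel x let Q(y, x) be the product of the fanins of the gates on paths from x to y.  A walk
   backwards from y through uniformly chosen in-neighbours reaches x with probability at least
   1 / Q(y, x), whence the Kraft inequality sum_x 1 / Q(y, x) <= 1.  By AM-GM the product of
   the Q(y, x) is at least hl ^ hl, and as k ^ 3 <= 3 ^ k, the fanins of the gates on paths
   into y, counted once per bottom pixel below them, add up to at least 3 hl log_3 hl.
   Summing over the outputs, a gate g is counted once per pair (line, pixel) with the pixel
   below g and g below the line.  All these lines contain all these pixels, and splitting at
   the middle row of the FHT recursion shows that such a rectangle has at most hl cells.
   Hence 3 w hl^2 log_3 hl <= hl * size. *)

From Pilot Require Import Defs.
From Stdlib Require Import Reals Lra.
From mathcomp Require Import all_boot all_order all_algebra zify.
Import Order.TTheory GRing.Theory Num.Theory.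

Set Implicit Arguments.
Unset Strict Implicit.
Unset Printing Implicit Defensive.

Lemma half_odd_inj t t' : t./2 = t'./2 -> odd t = odd t' -> t = t'.
Proof. by move=> e1 e2; rewrite -(odd_double_half t) -(odd_double_half t') e1 e2. Qed.

Lemma card_le_double_image (T U : finType) (f : T -> U) (b : T -> bool) (B : {set T}) :
  injective (fun x => (f x, b x)) -> #|B| <= 2 * #|f @: B|.
Proof.
move=> inj; rewrite -(card_in_imset (in2W inj)) mulnC -[2]card_bool -cardsT -cardsX.
apply: subset_leq_card; apply/subsetP => _ /imsetP[x xB ->].
by rewrite in_setX imset_f ?in_setT.
Qed.

Lemma big_minn_le (I : eqType) (r : seq I) (P : pred I) (G : I -> nat) m x :
  x \in r -> P x -> \big[minn/m]_(i <- r | P i) G i <= G x.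
Proof.
elim: r => [|y r IH] //; rewrite in_cons big_cons => /predU1P[<- -> | /IH le Px].
  exact: geq_minl.
by case: (P y); rewrite ?geq_min le ?orbT.
Qed.

Definition rectangle_bounded (T L : finType) (S : L -> {set T}) c :=
  forall (A : {set T}) (B : {set L}), {in B, forall l, A \subset S l} -> #|A| * #|B| <= c.

Lemma sub_rectangle_bounded (T L : finType) (S S' : L -> {set T}) c :
  rectangle_bounded S c -> (forall l, S' l \subset S l) -> rectangle_bounded S' c.
Proof. by move=> rect sub A B AB; apply: rect => l /AB /subset_trans; apply. Qed.

(* [fht_offset k t r] is the column offset, relative to the bottom pixel, of the pixel in row
   [r] of the level-[k] FHT pattern whose choices [s] are the binary digits of [t], the last
   doubling step using the lowest digit. *)
Fixpoint fht_offset (k t r : nat) : nat :=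
  match k with
  | 0 => 0
  | k'.+1 => if r < 2 ^ k' then fht_offset k' t./2 r
             else fht_offset k' t./2 (r - 2 ^ k') + fht_offset k' t./2 (2 ^ k' - 1) + odd t
  end.

Lemma fht_offset0 k t : fht_offset k t 0 = 0.
Proof. by elim: k t => [|k IH] t //=; rewrite expn_gt0 /= IH. Qed.

Lemma fht_offset_low m k t r :
  r < 2 ^ k -> fht_offset (m + k) t r = fht_offset k (t %/ 2 ^ m) r.
Proof.
move=> hr; elim: m t => [|m IH] t; first by rewrite expn0 divn1.
rewrite addSn /= (leq_trans hr) ?leq_exp2l ?leq_addl //.
by rewrite IH -divn2 -divnMA expnS mulnC.
Qed.

Section FHTLines.
Variables (h w N : nat).
Hypothesis w_gt1 : 1 < w.

Let w_gt0 : 0 < w. Proof. exact: ltnW. Qed.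

Lemma modnD_small_inj a b m : a < w -> b < w -> (a + m) %% w = (b + m) %% w -> a = b.
Proof. by move=> ha hb /eqP; rewrite eqn_modDr !modn_small // => /eqP. Qed.

Lemma bool_modnD_inj (a b : bool) m : (m + a) %% w = (m + b) %% w -> a = b.
Proof.
have bool_lt (c : bool) : c < w by case: c; lia.
rewrite ![m + _]addnC => /(modnD_small_inj (bool_lt a) (bool_lt b)) /eqP.
by case: a; case: b.
Qed.

Definition fht_col k j t r := (j + fht_offset k t r) %% w.

Lemma fht_col_lt k j t r : fht_col k j t r < w.
Proof. exact: ltn_pmod. Qed.

Definition on_line k (l : 'I_w * 'I_N) (p : pixel h w) :=
  (p.1 < 2 ^ k) && (p.2 == fht_col k l.1 l.2 p.1 :> nat).

Lemma on_line0 l (p : pixel h w) : on_line 0 l p = (p.1 == 0 :> nat) && (p.2 == l.1 :> nat).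
Proof. by rewrite /on_line /fht_col addn0 modn_small // expn0 ltnS leqn0. Qed.

Lemma half_lt (t : 'I_N) : t./2 < N.
Proof. by apply: leq_ltn_trans (ltn_ord t); rewrite -divn2 leq_div. Qed.

Definition lower_line (l : 'I_w * 'I_N) : 'I_w * 'I_N :=
  (l.1, Ordinal (half_lt l.2)).

Definition upper_col k (l : 'I_w * 'I_N) :=
  (l.1 + fht_offset k l.2./2 (2 ^ k - 1) + odd l.2) %% w.

Lemma upper_col_lt k l : upper_col k l < w. Proof. exact: ltn_pmod. Qed.

Definition upper_line k (l : 'I_w * 'I_N) : 'I_w * 'I_N :=
  (Ordinal (upper_col_lt k l), Ordinal (half_lt l.2)).

Lemma shift_down_lt k (p : pixel h w) : p.1 - 2 ^ k < h.
Proof. exact: leq_ltn_trans (leq_subr _ _) (ltn_ord _). Qed.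

Definition shift_down k (p : pixel h w) : pixel h w :=
  (Ordinal (shift_down_lt k p), p.2).

Lemma shift_down_inj k (p p' : pixel h w) :
  2 ^ k <= p.1 -> 2 ^ k <= p'.1 -> shift_down k p = shift_down k p' -> p = p'.
Proof.
by case: p p' => [a b] [c d] /= ha hc [e ->]; congr pair; apply: val_inj => /=; lia.
Qed.

Lemma on_line_lower k l (p : pixel h w) :
  p.1 < 2 ^ k -> on_line k.+1 l p = on_line k (lower_line l) p.
Proof.
move=> hp; rewrite /on_line /fht_col /= hp.
by rewrite (leq_trans hp) // leq_exp2l.
Qed.

Lemma on_line_upper k l (p : pixel h w) :
  2 ^ k <= p.1 -> on_line k.+1 l p = on_line k (upper_line k l) (shift_down k p).
Proof.
move=> hp; rewrite /on_line /fht_col /= (ltnNge p.1 (2 ^ k)) hp /= /upper_col modnDml expnS.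
congr andb; first by apply/idP/idP; lia.
by congr (_ == _ %% w); lia.
Qed.

Lemma line_eq (l l' : 'I_w * 'I_N) :
  (l.1 : nat) = l'.1 -> (l.2 : nat) = l'.2 -> l = l'.
Proof. by case: l l' => [a b] [c d] /= /val_inj -> /val_inj ->. Qed.

Definition fht_line k l : {set pixel h w} := [set p | on_line k l p].

Section FixedLine.
Variables (k : nat) (l : 'I_w * 'I_N).
Hypothesis hk : 2 ^ k <= h.

Let pixel_at r (r_lt : r < 2 ^ k) : pixel h w :=
  (Ordinal (leq_trans r_lt hk), Ordinal (fht_col_lt k l.1 l.2 r)).

Let pixel_at_line r (r_lt : r < 2 ^ k) : pixel_at r_lt \in fht_line k l.
Proof. by rewrite inE /on_line /= r_lt eqxx. Qed.

Lemma card_fht_line : #|fht_line k l| = 2 ^ k.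
Proof.
pose f (r : 'I_(2 ^ k)) := pixel_at (ltn_ord r).
have f_inj : injective f by move=> r r' [/val_inj].
suff -> : fht_line k l = f @: 'I_(2 ^ k) by rewrite card_imset ?card_ord.
apply/setP => -[a b]; rewrite !inE; apply/andP/imsetP => [[alt /eqP bcol] | [r _ [-> ->]]].
  by exists (Ordinal alt) => //; congr pair; apply: val_inj.
by split => /=.
Qed.

Lemma rtop_fht_line : rtop (fht_line k l) = 2 ^ k - 1.
Proof.
have top_lt : 2 ^ k - 1 < 2 ^ k by rewrite subn1 prednK ?expn_gt0.
apply/eqP; rewrite eqn_leq /rtop; apply/andP; split.
  apply/bigmax_leqP => p; rewrite inE => /andP[hp _].
  by rewrite subn1 -ltnS prednK ?expn_gt0.
exact: (@leq_bigmax_cond _ (mem (fht_line k l)) (fun q : pixel h w => nat_of_ord q.1) _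
          (pixel_at_line top_lt)).
Qed.

Lemma rbot_fht_line : rbot (fht_line k l) = 0.
Proof.
apply/eqP; rewrite -leqn0.
exact: (big_minn_le _ _ (mem_index_enum _) (pixel_at_line (expn_gt0 2 k))).
Qed.

Lemma pcol_fht_line r : r < 2 ^ k -> pcol (fht_line k l) r = fht_col k l.1 l.2 r.
Proof.
move=> r_lt; rewrite /pcol; case: pickP => [p /andP[] | none].
  by rewrite inE => /andP[_ /eqP ->] /eqP ->.
by have := none (pixel_at r_lt); rewrite pixel_at_line eqxx.
Qed.

Lemma Delta_fht_line : Defs.Delta (fht_line k l) = fht_offset k l.2 (2 ^ k - 1) %% w.
Proof.
have k_gt0 : 0 < 2 ^ k by rewrite expn_gt0.
rewrite /Defs.Delta rtop_fht_line rbot_fht_line !pcol_fht_line ?subn1 ?prednK //.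
rewrite /fht_col fht_offset0 addn0 (modn_small (ltn_ord _)) -subn1.
rewrite -addnBA; last exact: ltnW.
by rewrite modnDml addnAC subnKC ?modnDl // ltnW.
Qed.

End FixedLine.

Lemma fht_col_shift k j t r s :
  (fht_col k j t r + (fht_offset k t (2 ^ k - 1) %% w + s)) %% w =
  fht_col k ((j + fht_offset k t (2 ^ k - 1) + s) %% w) t r.
Proof.
rewrite /fht_col modnDml [_ %% w + s]addnC addnA modnDmr modnDml.
by congr (_ %% w); lia.
Qed.

Lemma mem_tran_fht_line k l (p : pixel h w) : 2 ^ k <= h ->
  let T := fht_line k (lower_line l) in
  (p \in tran (2 ^ k) (Defs.Delta T + odd l.2) T) = (2 ^ k <= p.1) && on_line k.+1 l p.
Proof.
move=> hk T; rewrite inE Delta_fht_line //.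
apply/existsP/andP => [[q /andP[qT /andP[/eqP p1 /eqP p2]]] | [hp]].
  have hp : 2 ^ k <= p.1 by rewrite p1 leq_addl.
  move: qT; rewrite inE => /andP[qlt /eqP qcol].
  split => //; rewrite on_line_upper // /on_line /= p1 addnK qlt p2 qcol fht_col_shift.
  by apply/eqP.
rewrite on_line_upper // => /andP[qlt /eqP pcol].
exists (Ordinal (shift_down_lt k p), Ordinal (fht_col_lt k l.1 l.2./2 (p.1 - 2 ^ k))).
by rewrite inE /on_line /= qlt subnK // pcol fht_col_shift !eqxx.
Qed.

Lemma fht_line_in_Hk k l : 2 ^ k <= h -> fht_line k l \in Hk h w k.
Proof.
elim: k l => [|k IH] l hk.
  apply/imsetP; exists (Ordinal hk, l.1); first by rewrite inE.
  by apply/setP => -[a b]; rewrite !inE on_line0 xpair_eqE -!val_eqE.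
apply/imset2P; exists (fht_line k (lower_line l)) (odd l.2); rewrite ?inE.
- by apply: IH; apply: leq_trans hk; rewrite leq_exp2l.
- by [].
apply/setP => p; rewrite in_setU mem_tran_fht_line; last first.
  by apply: leq_trans hk; rewrite leq_exp2l.
case: (ltnP p.1 (2 ^ k)) => hp; first by rewrite !inE on_line_lower // orbF.
have off_lower : on_line k (lower_line l) p = false by rewrite /on_line ltnNge hp.
by rewrite !inE off_lower.
Qed.

Lemma lower_line_parity_inj : injective (fun l => (lower_line l, odd l.2)).
Proof.
move=> l l' [e1 e2 e3].
by apply: line_eq; [rewrite e1 | apply: half_odd_inj].
Qed.

Lemma upper_line_parity_inj k : injective (fun l => (upper_line k l, odd l.2)).
Proof.
move=> l l' [e1 e2 e3].
apply: line_eq; last exact: half_odd_inj.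
by move: e1; rewrite /upper_col e2 e3 -!addnA; apply: modnD_small_inj.
Qed.

Lemma lower_line_inj_at k (p : pixel h w) l l' : 2 ^ k <= p.1 ->
  on_line k.+1 l p -> on_line k.+1 l' p -> lower_line l = lower_line l' -> l = l'.
Proof.
move=> hp; rewrite !on_line_upper // => /andP[_ /eqP c] /andP[_ /eqP c'] e.
apply: lower_line_parity_inj; congr pair => //; case: e => e1 e2.
move: c'; rewrite c /fht_col /= e2.
move=> /(modnD_small_inj (upper_col_lt _ _) (upper_col_lt _ _)).
by rewrite /upper_col e1 e2 => /bool_modnD_inj.
Qed.

Lemma upper_line_inj_at k (p : pixel h w) l l' : p.1 < 2 ^ k ->
  on_line k.+1 l p -> on_line k.+1 l' p -> upper_line k l = upper_line k l' -> l = l'.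
Proof.
move=> hp; rewrite !on_line_lower // => /andP[_ /eqP c] /andP[_ /eqP c'] e.
apply: (@upper_line_parity_inj k); congr pair => //; case: e => e1 e2.
have e0 : l.1 = l'.1 :> nat.
  by move: c'; rewrite c /fht_col /= e2 => /modnD_small_inj; apply.
by move: e1; rewrite /upper_col e0 e2 => /bool_modnD_inj.
Qed.

Definition line_rect_bound k := forall (A : {set pixel h w}) (B : {set 'I_w * 'I_N}),
  {in B, forall l : 'I_w * 'I_N, l.2 < 2 ^ k} ->
  {in A & B, forall (p : pixel h w) l, on_line k l p} ->
  #|A| * #|B| <= 2 ^ k.

Lemma line_rect_bound0 : line_rect_bound 0.
Proof.
move=> A B Bt AB; have [->|[p0 p0A]] := set_0Vmem A; first by rewrite cards0.
have [->|[l0 l0B]] := set_0Vmem B; first by rewrite cards0 muln0.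
have A1 : #|A| <= 1.
  apply/card_le1_eqP => p p' pA p'A.
  move: (AB _ _ pA l0B) (AB _ _ p'A l0B); rewrite !on_line0.
  case: p p' {pA p'A} => [a b] [c d] /andP[/eqP a0 /eqP bl] /andP[/eqP c0 /eqP dl].
  by congr pair; apply: val_inj; rewrite /= ?a0 ?c0 ?bl ?dl.
have B1 : #|B| <= 1.
  apply/card_le1_eqP => l l' lB l'B.
  have := Bt _ lB; have := Bt _ l'B; rewrite expn0 !ltnS !leqn0 => /eqP t'0 /eqP t0.
  move: (AB _ _ p0A lB) (AB _ _ p0A l'B); rewrite !on_line0.
  move=> /andP[_ /eqP e] /andP[_ /eqP e'].
  by apply: line_eq; rewrite -?e -?e' ?t0 ?t'0.
by rewrite expn0; nia.
Qed.

(* On the lower half, and on the upper half shifted down, a line of height [2 ^ k.+1] is the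
   line [lower_line l], resp. [upper_line k l], of height [2 ^ k]; both maps are at most
   two-to-one, and they are injective on lines sharing a pixel of the other half. *)
Lemma line_rect_boundS k : line_rect_bound k -> line_rect_bound k.+1.
Proof.
move=> IH A B Bt AB.
pose lower_half := [set p : pixel h w | p.1 < 2 ^ k].
have cardA : #|A| = #|A :&: lower_half| + #|A :\: lower_half| by rewrite cardsID.
have half_slope_lt l : l \in B -> l.2./2 < 2 ^ k.
  by move=> /Bt; rewrite ltn_half_double -muln2 expnS mulnC.
have lower_half_bound : #|A :&: lower_half| * #|lower_line @: B| <= 2 ^ k.
  apply: IH => [l' /imsetP[l /half_slope_lt ? ->] //|p l' /setIP[pA] /[!inE] plt].
  by move=> /imsetP[l lB ->]; rewrite -on_line_lower ?AB.
have upper_half_bound : #|A :\: lower_half| * #|upper_line k @: B| <= 2 ^ k.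
  rewrite -(@card_in_imset _ _ (shift_down k)); last first.
    move=> p p' /[!inE] /andP[plt _] /andP[p'lt _].
    by apply: shift_down_inj; rewrite leqNgt.
  apply: IH => [l' /imsetP[l /half_slope_lt ? ->] // | p' l'].
  move=> /imsetP[p /setDP[pA] /[!inE] plt ->] /imsetP[l lB ->].
  by rewrite -on_line_upper ?AB // leqNgt.
have lowerB := card_le_double_image B lower_line_parity_inj.
have upperB := card_le_double_image B (@upper_line_parity_inj k).
have [A2e | [p2 /setDP[p2A /[!inE] p2lt]]] := set_0Vmem (A :\: lower_half).
  rewrite cardA A2e cards0 addn0 expnS (leq_trans (leq_mul (leqnn _) lowerB)) //.
  by rewrite mulnCA leq_mul2l lower_half_bound orbT.
have [A1e | [p1 /setIP[p1A /[!inE] p1lt]]] := set_0Vmem (A :&: lower_half).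
  rewrite cardA A1e cards0 add0n expnS (leq_trans (leq_mul (leqnn _) upperB)) //.
  by rewrite mulnCA leq_mul2l upper_half_bound orbT.
rewrite -leqNgt in p2lt.
rewrite cardA mulnDl expnS mul2n -addnn leq_add //.
  rewrite -(card_in_imset (f := lower_line)) // => l l' lB l'B.
  by apply: lower_line_inj_at p2lt _ _; apply: AB.
rewrite -(card_in_imset (f := upper_line k)) // => l l' lB l'B.
by apply: upper_line_inj_at p1lt _ _; apply: AB.
Qed.

End FHTLines.

Lemma fht_line_rectangle_bounded h w k : 1 < w ->
  rectangle_bounded (fun l : 'I_w * 'I_(2 ^ k) => fht_line h k l) (2 ^ k).
Proof.
move=> w_gt1 A B AB; have bound j : line_rect_bound h w (2 ^ k) j.
  by elim: j => [|j]; [apply: line_rect_bound0 | apply: line_rect_boundS].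
apply: bound => [l _ | p l pA lB]; first exact: ltn_ord.
by have := subsetP (AB l lB) p pA; rewrite inE.
Qed.

Lemma fht_col_scale w d e j t r : r < 2 ^ d ->
  fht_col w (e + d) j (t * 2 ^ e) r = fht_col w d j t r.
Proof. by move=> r_lt; rewrite /fht_col fht_offset_low // mulnK // expn_gt0. Qed.

Lemma cube_leq_exp3 k : k ^ 3 <= 3 ^ k.
Proof.
elim: k => // k IH.
case: (ltnP k 3) => hk; first by case: k hk {IH} => [|[|[|]]].
rewrite [3 ^ _]expnS; apply: leq_trans (leq_mul (leqnn 3) IH).
rewrite !expnS expn0 !muln1; nia.
Qed.

Lemma sum_pair_indicator (I J : finType) (P : {set I}) (P' : {set J}) c :
  \sum_(i : I) \sum_(j : J) (if (i \in P) && (j \in P') then c else 0) = #|P| * #|P'| * c.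
Proof.
rewrite (eq_bigr (fun i => if i \in P then #|P'| * c else 0)).
  by rewrite -big_mkcond sum_nat_const mulnA.
move=> i _; case: (i \in P) => /=; last by rewrite big1.
by rewrite -big_mkcond sum_nat_const.
Qed.

Lemma prodn_expn (I : finType) (A : {pred I}) (G : I -> nat) m :
  (\prod_(i in A) G i) ^ m = \prod_(i in A) G i ^ m.
Proof. by apply: (big_morph (fun k => k ^ m)) => [k1 k2|]; rewrite ?expnMn ?exp1n. Qed.

Section Circuit.
Variables (h w n : nat) (pr : 'I_n -> {set node h w n}).
Hypothesis wf : well_formed pr.

Lemma gval_fuel f k1 k2 (g : 'I_n) : g < k1 -> g < k2 -> gval pr f k1 g = gval pr f k2 g.
Proof.
elim: k1 k2 g => [|k1 IH] [|k2] g // g_lt1 g_lt2 /=.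
apply: eq_existsb => -[p|g'] //=; case g'g: (inr g' \in pr g) => //=.
by have := (wf g).2 g' g'g => g'_lt; apply: IH; lia.
Qed.

Lemma nval_gate f (g : 'I_n) : nval pr f (inr g) = [exists u in pr g, nval pr f u].
Proof.
rewrite /nval (@gval_fuel f n g.+1) //=.
apply: eq_existsb => -[p|g'] //=; case g'g: (inr g' \in pr g) => //=.
by have := (wf g).2 g' g'g => g'_lt; rewrite (@gval_fuel f g n) //; lia.
Qed.

Definition inputs (v : node h w n) : {set pixel h w} := [set p | nval pr (eq_op^~ p) v].

Lemma inputs_pixel p : inputs (inl p) = [set p].
Proof. by apply/setP => q; rewrite !inE. Qed.

Lemma mem_inputs_gate g p : (p \in inputs (inr g)) = [exists u in pr g, p \in inputs u].
Proof. by rewrite inE nval_gate; apply: eq_existsb => u; rewrite inE. Qed.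

Definition feeds : rel (node h w n) := fun u v => if v is inr g then u \in pr g else false.

Lemma inputs_connect u v : connect feeds u v -> inputs u \subset inputs v.
Proof.
move/connectP => [s pth ->]; elim: s u pth => [|x s IH] u /=; first by rewrite subxx.
move=> /andP[ux pth]; apply: subset_trans (IH _ pth).
case: x ux {pth IH} => //= g ug; apply/subsetP => p pu.
by rewrite mem_inputs_gate; apply/existsP; exists u; rewrite ug.
Qed.

Lemma connect_from_gate (g : 'I_n) v :
  connect feeds (inr g) v -> if v is inr g' then g <= g' else false.
Proof.
move/connectP => [s pth ->]; elim: s g pth => [|x s IH] g //= /andP[].
case: x => // g1 gg1 /IH; have := (wf g1).2 g gg1.
by case: (last _ s) => // g2; lia.
Qed.

Lemma pred_not_connect g u : u \in pr g -> ~~ connect feeds (inr g) u.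
Proof.
move=> ug; apply/negP => /connect_from_gate.
by case: u ug => // g' /(wf g).2; lia.
Qed.

Definition path_gates v x :=
  [set g : 'I_n | connect feeds (inr g) v && (x \in inputs (inr g))].

Lemma mem_path_gates v x g :
  (g \in path_gates v x) = connect feeds (inr g) v && (x \in inputs (inr g)).
Proof. by rewrite [in LHS]inE. Qed.

Definition fanin_prod v x := \prod_(g in path_gates v x) #|pr g|.

Lemma fanin_gt0 g : 0 < #|pr g|.
Proof. by rewrite card_gt0; exact: (wf g).1. Qed.

Lemma fanin_prod_gt0 v x : 0 < fanin_prod v x.
Proof. by apply: prodn_gt0 => g; apply: fanin_gt0. Qed.

Lemma fanin_prod_pred g u x :
  u \in pr g -> x \in inputs u -> #|pr g| * fanin_prod u x <= fanin_prod (inr g) x.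
Proof.
move=> ug xu.
have sub : g |: path_gates u x \subset path_gates (inr g) x.
  apply/subsetP => g'; rewrite in_setU1 !mem_path_gates => /orP[/eqP -> | /andP[c xa]].
    by rewrite connect0 mem_inputs_gate; apply/existsP; exists u; rewrite ug.
  by rewrite xa andbT (connect_trans c) // connect1.
have g_new : g \notin path_gates u x by rewrite mem_path_gates negb_and pred_not_connect.
rewrite /fanin_prod [X in _ <= X](big_setID (g |: path_gates u x)) /= (setIidPr sub).
by rewrite big_setU1 //= leq_pmulr // prodn_gt0 // => g'; apply: fanin_gt0.
Qed.

Local Open Scope ring_scope.

Definition kraft_sum v : rat := \sum_(x in inputs v) ((fanin_prod v x)%:R)^-1.

Lemma kraft_sum_pixel p : kraft_sum (inl p) <= 1.
Proof.
by rewrite /kraft_sum inputs_pixel big_set1 invf_le1 ?ler1n ?ltr0n ?fanin_prod_gt0.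
Qed.

Lemma kraft_sum_gate g :
  (forall u, u \in pr g -> kraft_sum u <= 1) -> kraft_sum (inr g) <= 1.
Proof.
move=> kraft_pred; pose k : rat := (#|pr g|)%:R.
have k_gt0 : 0 < k by rewrite ltr0n fanin_gt0.
pose F u x : rat := k^-1 * ((fanin_prod u x)%:R)^-1.
have F_ge0 u x : 0 <= F u x by rewrite mulr_ge0 // invr_ge0 ler0n.
apply: (@le_trans _ _ (\sum_(x in inputs (inr g)) \sum_(u in pr g | x \in inputs u) F u x)).
  apply: ler_sum => x; rewrite mem_inputs_gate => /existsP[u /andP[ug xu]].
  rewrite (bigD1 u) ?ug //= -[X in X <= _]addr0 lerD ?sumr_ge0 //.
  rewrite /F -invfM lef_pV2 ?posrE ?mulr_gt0 ?ltr0n ?fanin_prod_gt0 ?fanin_gt0 //.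
  by rewrite /k -natrM ler_nat fanin_prod_pred.
pose Q x u := (u \in pr g) && (x \in inputs u).
rewrite (exchange_big_dep (mem (pr g)) (Q := Q)) /=; last by move=> x u _ /andP[].
apply: (@le_trans _ _ (\sum_(u in pr g) k^-1)); last first.
  by rewrite sumr_const -mulr_natl mulfV // gt_eqF.
apply: ler_sum => u ug.
have sub : inputs u \subset inputs (inr g) by apply: inputs_connect; apply: connect1.
rewrite (eq_bigl (mem (inputs u))) => [|x]; last first.
  by rewrite /Q ug andb_idl // => /(subsetP sub).
rewrite -mulr_sumr -[X in _ <= X]mulr1 ler_wpM2l ?invr_ge0 ?ler0n //.
exact: kraft_pred.
Qed.

Lemma kraft_inequality v : kraft_sum v <= 1.
Proof.
case: v => [p | g]; first exact: kraft_sum_pixel.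
have [m g_lt] := ubnP (val g); elim: m g g_lt => // m IH g g_lt.
apply: kraft_sum_gate => -[p | g'] g'g; first exact: kraft_sum_pixel.
by apply: IH; apply: leq_trans ((wf g).2 g' g'g) _.
Qed.

Lemma card_pow_le_prod_fanin v (X : {set pixel h w}) :
  X \subset inputs v -> (#|X| ^ #|X| <= \prod_(x in X) fanin_prod v x)%N.
Proof.
move=> sub; pose E x : rat := ((fanin_prod v x)%:R)^-1.
have E_ge0 x : 0 <= E x by rewrite invr_ge0 ler0n.
have sumE : \sum_(x in X) E x <= 1.
  apply: le_trans (kraft_inequality v).
  rewrite /kraft_sum [leRHS](big_setID X) /= (setIidPr sub) /E lerDl.
  by apply: sumr_ge0 => x _; rewrite invr_ge0.
have AGM : \prod_(x in X) E x <= (#|X|%:R^-1) ^+ #|X|.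
  apply: le_trans (leif_AGM (fun x _ => E_ge0 x)).1 _.
  rewrite lerXn2r ?nnegrE ?divr_ge0 ?sumr_ge0 ?invr_ge0 ?ler0n //.
  by rewrite -[leRHS]mul1r ler_wpM2r // invr_ge0 ler0n.
rewrite prodfV -natr_prod exprVn -natrX lef_pV2 ?posrE ?ltr0n ?expn_gt0 in AGM.
- by rewrite ler_nat in AGM.
- by rewrite prodn_gt0 // => x; apply: fanin_prod_gt0.
- by rewrite lt0n orNb.
Qed.

Local Close Scope ring_scope.

Lemma fanin_prod_cube v x : fanin_prod v x ^ 3 <= 3 ^ (\sum_(g in path_gates v x) #|pr g|).
Proof.
rewrite expn_sum /fanin_prod prodn_expn.
by apply: leq_prod => g _; apply: cube_leq_exp3.
Qed.

Definition line_cost v (X : {set pixel h w}) :=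
  \sum_(x in X) \sum_(g in path_gates v x) #|pr g|.

Lemma card_pow_le_line_cost v (X : {set pixel h w}) :
  X \subset inputs v -> #|X| ^ (3 * #|X|) <= 3 ^ line_cost v X.
Proof.
move=> sub; rewrite mulnC expnM /line_cost expn_sum.
apply: (@leq_trans ((\prod_(x in X) fanin_prod v x) ^ 3)).
  by rewrite leq_exp2r // card_pow_le_prod_fanin.
rewrite prodn_expn; apply: leq_prod => x _; apply: fanin_prod_cube.
Qed.

Lemma sum_line_cost_le (L : finType) (Y : L -> node h w n) (Bot : {set pixel h w}) c :
  rectangle_bounded (fun l => inputs (Y l) :&: Bot) c ->
  \sum_l line_cost (Y l) (inputs (Y l) :&: Bot) <= c * csize pr.
Proof.
move=> rect.
pose reach g := [set l | connect feeds (inr g) (Y l)].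
pose below g := inputs (inr g) :&: Bot.
have rect_g g : #|below g| * #|reach g| <= c.
  by apply: rect => l; rewrite inE => /inputs_connect sub; apply: setSI.
pose incidence l x g := if (l \in reach g) && (x \in below g) then #|pr g| else 0.
apply: (@leq_trans (\sum_l \sum_x \sum_g incidence l x g)).
  apply: leq_sum => l _; rewrite /line_cost big_mkcond /=; apply: leq_sum => x _.
  case: ifP => // /setIP[_ xBot]; rewrite big_mkcond /=; apply: leq_sum => g _.
  case: ifP => // /[!mem_path_gates] /andP[gl xg].
  by rewrite /incidence /below in_setI xg xBot inE gl.
under eq_bigr => l _ do rewrite exchange_big.
rewrite exchange_big /= /csize big_distrr /=; apply: leq_sum => g _.
by rewrite sum_pair_indicator leq_mul2r mulnC rect_g orbT.
Qed.

Theorem circuit_size_lower_bound (L : finType) (Y : L -> node h w n)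
    (Bot : {set pixel h w}) m c :
  rectangle_bounded (fun l => inputs (Y l) :&: Bot) c ->
  (forall l, #|inputs (Y l) :&: Bot| = m) ->
  m ^ (3 * m * #|L|) <= 3 ^ (c * csize pr).
Proof.
move=> rect card_m.
apply: (@leq_trans (3 ^ \sum_l line_cost (Y l) (inputs (Y l) :&: Bot))).
  rewrite expnM -prod_nat_const expn_sum; apply: leq_prod => l _.
  by rewrite -{1 2}(card_m l) card_pow_le_line_cost ?subsetIl.
by rewrite leq_exp2l // sum_line_cost_le.
Qed.

Lemma inputs_output out S T : computes pr out S -> T \in S -> inputs (out T) = T.
Proof.
case=> _ _ _ out_correct TS; apply/setP => p; rewrite inE out_correct //.
apply/existsP/idP => [[q /andP[qT /eqP <-]] // | pT].
by exists p; rewrite pT eqxx.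
Qed.

End Circuit.

Section RealBound.
Local Open Scope R_scope.

Lemma INR_expn a b : INR (a ^ b)%N = INR a ^ b.
Proof. by elim: b => [|b IH] //; rewrite expnS mult_INR IH. Qed.

Lemma ln_le_ln x y : 0 < x -> x <= y -> ln x <= ln y.
Proof.
by move=> x_pos /Rle_lt_or_eq [/(ln_increasing _ _ x_pos)/Rlt_le | <-] //; apply: Rle_refl.
Qed.

Lemma lower_bound_le w a c :
  (0 < a)%N -> (a ^ (3 * a * (w * a)) <= 3 ^ (a * c))%N -> lower_bound w a <= INR c.
Proof.
move=> a_gt0 /ssrnat.leP/le_INR; rewrite !INR_expn => pow_le.
have a_pos : 0 < INR a by apply/lt_0_INR/ssrnat.ltP.
have ln3_pos : 0 < ln (INR 3) by rewrite -ln_1; apply: ln_increasing; rewrite /=; lra.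
have := ln_le_ln (pow_lt _ _ a_pos) pow_le.
rewrite !ln_pow ?mult_INR //; last by rewrite /=; lra.
move=> ln_pow_le; rewrite /lower_bound.
apply: (Rmult_le_reg_r _ _ _ ln3_pos); apply: (Rmult_le_reg_l _ _ _ a_pos).
have -> : INR a * (INR 3 * INR w * INR a * (ln (INR a) / ln (INR 3)) * ln (INR 3)) =
           INR 3 * INR a * (INR w * INR a) * ln (INR a) by field; lra.
lra.
Qed.

End RealBound.

Section BottomLines.
Variables (h w : nat).
Hypothesis h_gt0 : 0 < h.

Local Notation d := (trunc_log 2 h).
Local Notation K := (up_log 2 h).

Lemma exp_trunc_log_le : 2 ^ d <= h.
Proof. exact: trunc_logP. Qed.

Lemma trunc_log_le_up_log : d <= K.
Proof. by rewrite -(@leq_exp2l 2) // (leq_trans exp_trunc_log_le) // up_logP. Qed.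

Lemma scaled_slope_lt (t : 'I_(2 ^ d)) : t * 2 ^ (K - d) < 2 ^ d * 2 ^ (K - d).
Proof. by rewrite ltn_pmul2r ?expn_gt0. Qed.

(* The bottom [2 ^ d] rows of a level-[K] line only depend on [t %/ 2 ^ (K - d)]
   ([fht_offset_low]), so scaling the choice code extends a level-[d] line to level [K]. *)
Definition scale_line (l : 'I_w * 'I_(2 ^ d)) : 'I_w * 'I_(2 ^ d * 2 ^ (K - d)) :=
  (l.1, Ordinal (scaled_slope_lt l.2)).

Definition fht_pattern (l : 'I_w * 'I_(2 ^ d)) : {set pixel h w} :=
  [set p : pixel h w | [exists q in fht_line (hbar h) K (scale_line l),
     (nat_of_ord q.1 == nat_of_ord p.1) && (nat_of_ord q.2 == nat_of_ord p.2)]].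

Lemma fht_pattern_in_FHT l : 1 < w -> fht_pattern l \in FHT h w.
Proof.
move=> w_gt1; apply/imsetP; exists (fht_line (hbar h) K (scale_line l)) => //.
exact: fht_line_in_Hk.
Qed.

Lemma fht_col_scale_slope j t r :
  r < 2 ^ d -> fht_col w K j (t * 2 ^ (K - d)) r = fht_col w d j t r.
Proof. by move/(fht_col_scale w (K - d) j t); rewrite subnK ?trunc_log_le_up_log. Qed.

Lemma fht_pattern_bottom l :
  fht_pattern l :&: [set p : pixel h w | p.1 < 2 ^ d] = fht_line h d l.
Proof.
apply/setP => p; rewrite !inE /on_line.
have [p_lt | p_ge] := ltnP p.1 (2 ^ d); last by rewrite andbF.
rewrite andbT; apply/existsP/idP => [[q /andP[]] | /eqP p_col].
  rewrite inE /on_line /= => /andP[_ /eqP q_col] /andP[/eqP q1 /eqP q2].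
  by rewrite -q2 q_col -q1 fht_col_scale_slope ?q1.
have p_lt_hbar : p.1 < hbar h by apply: leq_trans (ltn_ord p.1) (up_logP _ _).
exists (Ordinal p_lt_hbar, p.2).
rewrite inE /on_line /= !eqxx fht_col_scale_slope // p_col eqxx.
by rewrite (leq_trans p_lt) ?leq_exp2l ?trunc_log_le_up_log.
Qed.

End BottomLines.

Theorem theorem2 (h w : nat) :
  (2 <= w)%N -> (1 <= h)%N ->
  forall (n : nat) (pr : 'I_n -> {set node h w n})
         (out : {set pixel h w} -> node h w n),
    computes pr out (FHT h w) ->
    Rle (lower_bound w (2 ^ trunc_log 2 h)) (INR (csize pr)).
Proof.
move=> w_gt1 h_gt0 n pr out outP; have [wf _ _ _] := outP.
set d := trunc_log 2 h; pose bottom := [set p : pixel h w | p.1 < 2 ^ d].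
have bottom_inputs l : inputs pr (out (fht_pattern l)) :&: bottom = fht_line h d l.
  by rewrite (inputs_output outP) ?fht_pattern_in_FHT ?fht_pattern_bottom.
have := circuit_size_lower_bound wf (Y := fun l => out (fht_pattern l)) (Bot := bottom).
rewrite card_prod !card_ord => bound; apply: lower_bound_le; first by rewrite expn_gt0.
apply: bound => [|l]; last by rewrite bottom_inputs card_fht_line ?exp_trunc_log_le.
apply: (sub_rectangle_bounded (fht_line_rectangle_bounded w_gt1)) => l.
by rewrite bottom_inputs.
Qed.
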